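(* Let $G=(V,E)$ be a strongly biconnected directed graph and let $U_1,U_2$ be two distinct $2$-edge-biconnected blocks of $G$. Then $|U_1\cap U_2|\le 1$.
   Context: All graphs are finite. A directed graph $H$ is strongly biconnected if $H$ is strongly connected and its underlying undirected graph is biconnected. A strongly biconnected component of a directed graph $H=(W,F)$ is a maximal vertex subset $C\subseteq W$ such that the induced subgraph $H[C]$ is strongly biconnected. For a strongly biconnected directed graph $G=(V,E)$ and an edge $b\in E$, $G\setminus\{b\}=(V,E\setminus\{b\})$. For distinct $x,y\in V$, write $x \overset{e}{\leftrightsquigarrow} y$ if for every edge $b\in E$ there is a strongly biconnected component of $G\setminus\{b\}$ containing both $x$ and $y$. A $2$-edge-biconnected block of $G$ is a maximal vertex subset $U\subseteq V$ with $|U|>1$ such that $x \overset{e}{\leftrightsquigarrow} y$ for all distinct $x,y\in U$. *)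

(* Finite directed graphs: vertex type V : finType,
   edge set E : {set V * V} (a pair (x,y) is an edge x -> y). *)
From mathcomp Require Import all_boot.
Set Implicit Arguments.
Unset Strict Implicit.
Unset Printing Implicit Defensive.

Section Graphs.
Variable V : finType.

Definition darc (F : {set V * V}) (C : {set V}) : rel V :=
  fun x y => [&& (x, y) \in F, x \in C & y \in C].

Definition uarc (F : {set V * V}) (C : {set V}) : rel V :=
  fun x y => darc F C x y || darc F C y x.

Definition strongly_connected_on (F : {set V * V}) (C : {set V}) : bool :=
  [forall x in C, forall y in C, connect (darc F C) x y].

Definition uconnected_on (F : {set V * V}) (C : {set V}) : bool :=
  [forall x in C, forall y in C, connect (uarc F C) x y].

Definition biconnected_on (F : {set V * V}) (C : {set V}) : bool :=
  uconnected_on F C && [forall v in C, uconnected_on F (C :\ v)].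

Definition strongly_biconnected_on (F : {set V * V}) (C : {set V}) : bool :=
  strongly_connected_on F C && biconnected_on F C.

Definition sb_component (F : {set V * V}) (C : {set V}) : bool :=
  maxset (strongly_biconnected_on F) C.

Definition e_rel (E : {set V * V}) (x y : V) : bool :=
  [forall b in E, exists C : {set V},
     sb_component (E :\ b) C && (x \in C) && (y \in C)].

Definition two_edge_biconnected_block (E : {set V * V}) (U : {set V}) : bool :=
  maxset (fun U : {set V} =>
            (1 < #|U|) && [forall x in U, forall y in U, (x != y) ==> e_rel E x y])
         U.

End Graphs.

From mathcomp Require Import all_boot.

(* Suppose they share x <> y.  We show that every pair of distinct vertices of
   U1 :|: U2 is e-related; then U1 :|: U2 satisfies the defining property of a
   block, and maximality forces U1 = U1 :|: U2 = U2, a contradiction.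

   The graph-theoretic core is a gluing lemma: if A, B, C induce strongly
   biconnected subgraphs and pairwise meet in three distinct vertices, then so
   does A :|: B :|: C (removing any one vertex leaves two of the meeting
   points, which still chain the three pieces together).  Hence three
   strongly biconnected components meeting pairwise in distinct vertices are
   equal.  Applied in G \ b for every edge b this shows that three distinct
   vertices of a block lie in a common component of G \ b, and that for
   u in U1, w in U2 the components of G \ b containing {u, x, y} and
   {w, x, y} coincide, i.e. u <~e~> w. *)

Set Implicit Arguments.
Unset Strict Implicit.
Unset Printing Implicit Defensive.

Section Gluing.
Variable V : finType.

(* Connectivity of a vertex set A for an adjacency relation R A that may
   depend on A (as the adjacency of an induced subgraph does). *)
Definition conn_on (R : {set V} -> rel V) (A : {set V}) : bool :=
  [forall x in A, forall y in A, connect (R A) x y].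

Definition monotone_adj (R : {set V} -> rel V) : Prop :=
  forall (A B : {set V}) x y, A \subset B -> R A x y -> R B x y.

Variable R : {set V} -> rel V.
Hypothesis R_mono : monotone_adj R.

Lemma connect_mono (A B : {set V}) (x y : V) :
  A \subset B -> connect (R A) x y -> connect (R B) x y.
Proof.
move=> sAB; apply: connect_sub => a b /(R_mono sAB) Rab; exact: connect1.
Qed.

Lemma conn_on_union (A B : {set V}) (z : V) :
  conn_on R A -> conn_on R B -> z \in A -> z \in B -> conn_on R (A :|: B).
Proof.
move=> /forall_inP cA /forall_inP cB zA zB.
have to_z x : x \in A :|: B ->
    connect (R (A :|: B)) x z /\ connect (R (A :|: B)) z x.
  case/setUP => [xA | xB].
    have /forall_inP cx := cA x xA; have /forall_inP cz := cA z zA.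
    by split; apply: (connect_mono (subsetUl A B)); [exact: cx | exact: cz].
  have /forall_inP cx := cB x xB; have /forall_inP cz := cB z zB.
  by split; apply: (connect_mono (subsetUr A B)); [exact: cx | exact: cz].
apply/forall_inP => x xU; apply/forall_inP => y yU.
have [xz _] := to_z x xU; have [_ zy] := to_z y yU.
exact: connect_trans xz zy.
Qed.

Lemma conn_on_chain (A B C : {set V}) (s t : V) :
  conn_on R A -> conn_on R B -> conn_on R C ->
  s \in A -> s \in B -> t \in B -> t \in C -> conn_on R (A :|: B :|: C).
Proof.
move=> cA cB cC sA sB tB tC.
apply: conn_on_union (conn_on_union cA cB sA sB) cC _ tC.
by rewrite inE tB orbT.
Qed.

End Gluing.

Section StronglyBiconnected.
Variables (V : finType) (F : {set V * V}).

Lemma darc_mono : monotone_adj (darc F).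
Proof.
move=> A B x y sAB /and3P [xyF xA yA].
by rewrite /darc xyF !(subsetP sAB).
Qed.

Lemma uarc_mono : monotone_adj (uarc F).
Proof.
by move=> A B x y sAB /orP [] /(darc_mono sAB) a; rewrite /uarc a ?orbT.
Qed.

Lemma sb_uconnected_del (X : {set V}) (v : V) :
  strongly_biconnected_on F X -> uconnected_on F (X :\ v).
Proof.
case/and3P => _ cX /forall_inP cXv; have [vX | vNX] := boolP (v \in X).
  exact: cXv.
suff -> : X :\ v = X by [].
by apply/setP => z; rewrite in_setD1; case: eqP => // ->; rewrite (negbTE vNX).
Qed.

Lemma sb_glue3 (A B C : {set V}) (p q r : V) :
  strongly_biconnected_on F A -> strongly_biconnected_on F B ->
  strongly_biconnected_on F C ->
  p \in A -> p \in B -> q \in B -> q \in C -> r \in C -> r \in A ->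
  p != q -> q != r -> r != p ->
  strongly_biconnected_on F (A :|: B :|: C).
Proof.
move=> sbA sbB sbC pA pB qB qC rC rA pq qr rp.
have strong X : strongly_biconnected_on F X -> strongly_connected_on F X.
  by case/andP.
have weak X : strongly_biconnected_on F X -> uconnected_on F X.
  by case/and3P.
apply/and3P; split.
- apply: (conn_on_chain darc_mono (strong _ sbA) (strong _ sbB) (strong _ sbC)
    pA pB qB qC).
- apply: (conn_on_chain uarc_mono (weak _ sbA) (weak _ sbB) (weak _ sbC)
    pA pB qB qC).
apply/forall_inP => v _; rewrite !setDUl.
have dA := sb_uconnected_del v sbA; have dB := sb_uconnected_del v sbB.
have dC := sb_uconnected_del v sbC.
have keep x (X : {set V}) : x \in X -> v != x -> x \in X :\ v.
  by move=> xX vx; rewrite in_setD1 eq_sym vx.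
have [vp | vp] := eqVneq v p.
  (* without p, the pieces are chained as B, C, A through q and r *)
  subst v; rewrite (setUC (A :\ p)) setUAC.
  have pr : p != r by rewrite eq_sym.
  by apply: (conn_on_chain uarc_mono dB dC dA (s := q) (t := r)); apply: keep.
have [vq | vq] := eqVneq v q.
  (* without q, the pieces are chained as B, A, C through p and r *)
  subst v; rewrite (setUC (A :\ q)).
  have qp : q != p by rewrite eq_sym.
  by apply: (conn_on_chain uarc_mono dB dA dC (s := p) (t := r)); apply: keep.
by apply: (conn_on_chain uarc_mono dA dB dC (s := p) (t := q)); apply: keep.
Qed.

(* Three strongly biconnected components meeting pairwise in three distinct
   vertices coincide: their union is strongly biconnected, so by maximality
   each of them equals the union. *)
Lemma sb_component_glue3 (A B C : {set V}) (p q r : V) :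
  sb_component F A -> sb_component F B -> sb_component F C ->
  p \in A -> p \in B -> q \in B -> q \in C -> r \in C -> r \in A ->
  p != q -> q != r -> r != p -> A = B /\ B = C.
Proof.
move=> /maxsetP [sbA maxA] /maxsetP [sbB maxB] /maxsetP [sbC maxC].
move=> pA pB qB qC rC rA pq qr rp.
have sbU := sb_glue3 sbA sbB sbC pA pB qB qC rC rA pq qr rp.
have UA := maxA _ sbU (subset_trans (subsetUl A B) (subsetUl _ C)).
have UB := maxB _ sbU (subset_trans (subsetUr A B) (subsetUl _ C)).
have UC := maxC _ sbU (subsetUr _ C).
by split; [rewrite -UA UB | rewrite -UB UC].
Qed.

End StronglyBiconnected.

Section Blocks.
Variables (V : finType) (E : {set V * V}).

Definition e_clique (U : {set V}) : bool :=
  (1 < #|U|) && [forall x in U, forall y in U, (x != y) ==> e_rel E x y].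

Lemma block_e_rel (U : {set V}) (x y : V) :
  two_edge_biconnected_block E U ->
  x \in U -> y \in U -> x != y -> e_rel E x y.
Proof.
case/maxsetP => /andP [_ /forall_inP cU] _ xU yU xy.
by have /forall_inP /(_ y yU) /implyP := cU x xU; apply.
Qed.

Lemma e_rel_sym (x y : V) : e_rel E x y -> e_rel E y x.
Proof.
move=> /forall_inP exy; apply/forall_inP => b bE.
have /existsP [C /andP [/andP [cC xC] yC]] := exy b bE.
by apply/existsP; exists C; rewrite cC xC yC.
Qed.

Lemma e_rel_component (x y : V) (b : V * V) : e_rel E x y -> b \in E ->
  exists C, [/\ sb_component (E :\ b) C, x \in C & y \in C].
Proof.
move=> /forall_inP exy bE.
by have /existsP [C /andP [/andP [cC xC] yC]] := exy b bE; exists C.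
Qed.

Lemma block_triple_component (U : {set V}) (b : V * V) (x y z : V) :
  two_edge_biconnected_block E U -> b \in E ->
  x \in U -> y \in U -> z \in U -> x != y -> y != z -> z != x ->
  exists C, [/\ sb_component (E :\ b) C, x \in C, y \in C & z \in C].
Proof.
move=> blU bE xU yU zU xy yz zx.
have [A [cA xA yA]] := e_rel_component (block_e_rel blU xU yU xy) bE.
have [B [cB yB zB]] := e_rel_component (block_e_rel blU yU zU yz) bE.
have [C [cC zC xC]] := e_rel_component (block_e_rel blU zU xU zx) bE.
have [_ BC] := sb_component_glue3 cA cB cC yA yB zB zC xC xA yz zx xy.
by exists C; split; rewrite // -BC.
Qed.

(* If two blocks share two distinct vertices x, y, then every vertex of the
   first is e-related to every other vertex of the second: in each G \ b the
   components through {u, x, y} and {w, x, y} coincide. *)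
Lemma blocks_cross_e_rel (U1 U2 : {set V}) (x y u w : V) :
  two_edge_biconnected_block E U1 -> two_edge_biconnected_block E U2 ->
  x \in U1 :&: U2 -> y \in U1 :&: U2 -> x != y ->
  u \in U1 -> w \in U2 -> u != w -> e_rel E u w.
Proof.
move=> bl1 bl2 /setIP [x1 x2] /setIP [y1 y2] xy u1 w2 uw.
have [u2 | uN2] := boolP (u \in U2); first exact: block_e_rel bl2 u2 w2 uw.
have [w1 | wN1] := boolP (w \in U1); first exact: block_e_rel bl1 u1 w1 uw.
have ux : u != x by apply: contraNneq uN2 => ->.
have yu : y != u by apply: contraNneq uN2 => <-.
have wx : w != x by apply: contraNneq wN1 => ->.
have yw : y != w by apply: contraNneq wN1 => <-.
apply/forall_inP => b bE.
have [A [cA uA xA yA]] := block_triple_component bl1 bE u1 x1 y1 ux xy yu.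
have [D [cD wD xD yD]] := block_triple_component bl2 bE w2 x2 y2 wx xy yw.
have [AD _] := sb_component_glue3 cA cD cA xA xD yD yA uA uA xy yu ux.
by apply/existsP; exists A; rewrite cA uA AD wD.
Qed.

Lemma blocks_union_e_clique (U1 U2 : {set V}) (x y : V) :
  two_edge_biconnected_block E U1 -> two_edge_biconnected_block E U2 ->
  x \in U1 :&: U2 -> y \in U1 :&: U2 -> x != y -> e_clique (U1 :|: U2).
Proof.
move=> bl1 bl2 xI yI xy; apply/andP; split.
  apply: leq_trans (subset_leq_card (subsetUl U1 U2)).
  by case/maxsetP: bl1 => /andP [].
apply/forall_inP => a aU; apply/forall_inP => c cU; apply/implyP => ac.
case/setUP: aU => [a1 | a2]; case/setUP: cU => [c1 | c2].
- exact: block_e_rel bl1 a1 c1 ac.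
- exact: blocks_cross_e_rel bl1 bl2 xI yI xy a1 c2 ac.
- apply/e_rel_sym/(blocks_cross_e_rel bl1 bl2 xI yI xy c1 a2).
  by rewrite eq_sym.
- exact: block_e_rel bl2 a2 c2 ac.
Qed.

End Blocks.

Theorem mainTheorem2 (V : finType) (E : {set V * V})
    (hG : strongly_biconnected_on E [set: V])
    (U1 U2 : {set V})
    (h1 : two_edge_biconnected_block E U1)
    (h2 : two_edge_biconnected_block E U2)
    (hne : U1 != U2) :
  #|U1 :&: U2| <= 1.
Proof.
rewrite leqNgt; apply/negP => /card_gt1P [x [y [xI yI xy]]].
have cliqueU := blocks_union_e_clique h1 h2 xI yI xy.
have /maxsetP [_ max1] := h1; have /maxsetP [_ max2] := h2.
have U1_eq := max1 _ cliqueU (subsetUl U1 U2).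
have U2_eq := max2 _ cliqueU (subsetUr U1 U2).
by move/eqP: hne; apply; rewrite -U1_eq.
Qed.
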